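(* For every complex number $a$ of modulus one, there is no $6\times 6$ complex Hadamard matrix all of whose entries lie in $\{1,a,-\bar a\}$.
   Context: A complex Hadamard matrix (CHM) of order $n$ is an $n\times n$ complex matrix $H$ all of whose entries have modulus one and which satisfies $HH^\dagger=nI$. *)

From HB Require Import structures.
From mathcomp Require Import all_boot all_order all_algebra.
Set Implicit Arguments. Unset Strict Implicit. Unset Printing Implicit Defensive.
Import Order.TTheory GRing.Theory Num.Theory.
Local Open Scope ring_scope.

Definition conj_tr (C : numClosedFieldType) (n : nat) (H : 'M[C]_n) : 'M[C]_n :=
  (map_mx (@Num.conj C) H)^T.

Definition complex_hadamard (C : numClosedFieldType) (n : nat) (H : 'M[C]_n) : Prop :=
  (forall i j, `|H i j| = 1) /\ H *m conj_tr H = (n%:R)%:M.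

From HB Require Import structures.
From Stdlib Require Import ZArith Lia.
From mathcomp Require Import all_boot all_order all_algebra ssrZ.
From mathcomp Require Import ring.
Import Order.TTheory GRing.Theory Num.Theory.
Local Open Scope ring_scope.

(* Write t = a + a^* and z' for the conjugate of z.  For x, y in {1, a, -a^*}
   and z = x y', both z + z' and (z - z') / (a - a') are integer polynomials of
   degree at most 2 in t, so two orthogonal rows give integer quadratics I and
   II with I(t) = 0 and, when a is not real, II(t) = 0.  A computation over all
   3^12 pairs of rows shows that either I = II = 0 or t is a root of one of
   finitely many explicit polynomials m, some of which are excluded by
   |t| <= 2.  For each remaining m a second computation shows that among the
   3^6 possible rows there are no six pairwise compatible with a root of m,
   where a pair with I = II = 0 counts as compatible with every m. *)

(** * Integer quadratics *)

Definition Zr {R : numDomainType} (z : Z) : R := (int_of_Z z)%:~R.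

Section ZrTheory.
Variable R : numDomainType.

Lemma ZrD x y : Zr (Z.add x y) = Zr x + Zr y :> R.
Proof. by rewrite /Zr -intrD -raddfD. Qed.

Lemma ZrM x y : Zr (Z.mul x y) = Zr x * Zr y :> R.
Proof. by rewrite /Zr -intrM -rmorphM. Qed.

Lemma ZrB x y : Zr (Z.sub x y) = Zr x - Zr y :> R.
Proof. by rewrite /Zr -intrB -raddfB. Qed.

Lemma Zr_eq0 z : Zr z = 0 :> R -> z = Z0.
Proof. by rewrite /Zr => /eqP; rewrite intr_eq0 => /eqP h; rewrite -(int_of_ZK z) h. Qed.

Lemma Zr_eqb x y : Z.eqb x y -> Zr x = Zr y :> R.
Proof. by move/Z.eqb_eq->. Qed.

End ZrTheory.

(* [QuadZ c0 c1 c2] stands for c0 + c1 X + c2 X^2. *)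
Record quadZ := QuadZ { q0 : Z; q1 : Z; q2 : Z }.

Definition quadZ_coefs (P : quadZ) : Z * Z * Z := (q0 P, q1 P, q2 P).
Definition quadZ_of_coefs (c : Z * Z * Z) : quadZ := QuadZ c.1.1 c.1.2 c.2.
Lemma quadZ_coefsK : cancel quadZ_coefs quadZ_of_coefs. Proof. by case. Qed.
HB.instance Definition _ := Equality.copy quadZ (can_type quadZ_coefsK).

Definition qeval {R : numDomainType} (P : quadZ) (t : R) : R :=
  Zr (q0 P) + Zr (q1 P) * t + Zr (q2 P) * t ^+ 2.

Local Open Scope Z_scope.

Definition qadd (P Q : quadZ) : quadZ := QuadZ (q0 P + q0 Q) (q1 P + q1 Q) (q2 P + q2 Q).

Definition qmul_lin (P Q : quadZ) : quadZ :=
  QuadZ (q0 P * q0 Q) (q0 P * q1 Q + q1 P * q0 Q) (q1 P * q1 Q).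

Definition qlinear (P : quadZ) : bool := q2 P =? 0.

Definition qzero (P : quadZ) : bool := [&& q0 P =? 0, q1 P =? 0 & q2 P =? 0].

Definition qconst_nz (P : quadZ) : bool := [&& ~~ (q0 P =? 0), q1 P =? 0 & q2 P =? 0].

Definition qprop (P Q : quadZ) : bool :=
  [&& q0 P * q1 Q =? q1 P * q0 Q, q0 P * q2 Q =? q2 P * q0 Q & q1 P * q2 Q =? q2 P * q1 Q].

(* u^2 Q(-v/u) *)
Definition qhom (Q : quadZ) (u v : Z) : Z := q2 Q * v * v - q1 Q * u * v + q0 Q * u * u.

(* A necessary condition for P and m to have a common root: when deg m = 2,
   the common root is also a root of the linear form m2 P - p2 m. *)
Definition common_root_test (P m : quadZ) : bool :=
  if q2 m =? 0 then qhom P (q1 m) (q0 m) =? 0 else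
  let al := q2 m * q1 P - q2 P * q1 m in
  let be := q2 m * q0 P - q2 P * q0 m in
  if al =? 0 then be =? 0 else qhom m al be =? 0.

Local Close Scope Z_scope.

Definition far_roots (m : quadZ) : bool :=
  2 * `|int_of_Z (q1 m)| + 4 * `|int_of_Z (q2 m)| < `|int_of_Z (q0 m)|.

Section QuadEval.
Context {R : numDomainType} {t : R}.

Lemma qevalD P Q : qeval (qadd P Q) t = qeval P t + qeval Q t.
Proof. by rewrite /qeval /= !ZrD; ring. Qed.

Lemma qeval_mul_lin P Q :
  qlinear P -> qlinear Q -> qeval (qmul_lin P Q) t = qeval P t * qeval Q t.
Proof.
case: P Q => [p0 p1 p2] [r0 r1 r2]; rewrite /qlinear /= => /Z.eqb_eq -> /Z.eqb_eq ->.
by rewrite /qeval /= !(ZrD, ZrM) /Zr /=; ring.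
Qed.

Lemma qconst_nz_root {P} : qconst_nz P -> qeval P t != 0.
Proof.
case: P => p0 p1 p2 /and3P[/= p0_nz /Z.eqb_eq -> /Z.eqb_eq ->].
by rewrite /qeval /= /Zr !mul0r !addr0; apply: contraNneq p0_nz => /Zr_eq0 ->.
Qed.

Lemma qeval_scaled_root Q (u v : R) :
  u * t = - v -> u ^+ 2 * qeval Q t = Zr (q2 Q) * v ^+ 2 - Zr (q1 Q) * u * v + Zr (q0 Q) * u ^+ 2.
Proof.
move=> e; transitivity (Zr (q0 Q) * u ^+ 2 + Zr (q1 Q) * u * (u * t) + Zr (q2 Q) * (u * t) ^+ 2).
  by rewrite /qeval; ring.
by rewrite e; ring.
Qed.

Lemma Zr_qhom Q u v :
  Zr (qhom Q u v) = Zr (q2 Q) * Zr v ^+ 2 - Zr (q1 Q) * Zr u * Zr v + Zr (q0 Q) * Zr u ^+ 2 :> R.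
Proof. by rewrite /qhom !(ZrD, ZrB, ZrM); ring. Qed.

Lemma common_root_test_sound {P m} :
  qeval P t = 0 -> qeval m t = 0 -> common_root_test P m.
Proof.
rewrite /common_root_test => Pt mt; case: (Z.eqb_spec (q2 m) Z0) => [m2_0 | _].
  have e : Zr (q1 m) * t = - Zr (q0 m) :> R.
    by apply/eqP; rewrite -addr_eq0 addrC; move: mt; rewrite /qeval m2_0 /Zr mul0r addr0 => ->.
  by apply/Z.eqb_eq/(Zr_eq0 R); rewrite Zr_qhom -qeval_scaled_root // Pt mulr0.
set al := Z.sub _ _; set be := Z.sub _ _.
have e : Zr al * t = - Zr be :> R.
  apply/eqP; rewrite -addr_eq0; apply/eqP.
  transitivity (Zr (q2 m) * qeval P t - Zr (q2 P) * qeval m t).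
    by rewrite /al /be /qeval !(ZrB, ZrM); ring.
  by rewrite Pt mt !mulr0 subrr.
case: (Z.eqb_spec al Z0) => [al0 | _].
  by apply/Z.eqb_eq/(Zr_eq0 R)/eqP; rewrite -oppr_eq0 -e al0 /Zr mul0r.
by apply/Z.eqb_eq/(Zr_eq0 R); rewrite Zr_qhom -qeval_scaled_root // mt mulr0.
Qed.

Lemma qzero_common_root_test P m : qzero P -> common_root_test P m.
Proof.
case: P => p0 p1 p2 /and3P[/Z.eqb_eq /= -> /Z.eqb_eq /= -> /Z.eqb_eq /= ->].
rewrite /common_root_test /qhom /=.
by case: ifP => _ //; case: ifP => _; apply/Z.eqb_eq; lia.
Qed.

Lemma qeval_cross P Q (x y : R) :
  x * Zr (q0 Q) = y * Zr (q0 P) -> x * Zr (q1 Q) = y * Zr (q1 P) ->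
  x * Zr (q2 Q) = y * Zr (q2 P) -> x * qeval Q t = y * qeval P t.
Proof. by move=> e0 e1 e2; rewrite /qeval !mulrDr !mulrA e0 e1 e2. Qed.

Lemma qprop_root {P Q} : qprop P Q -> ~~ qzero P -> qeval P t = 0 -> qeval Q t = 0.
Proof.
case: P Q => [p0 p1 p2] [r0 r1 r2] /and3P[/= /(Zr_eqb R) e01 /(Zr_eqb R) e02 /(Zr_eqb R) e12].
rewrite !ZrM in e01 e02 e12 => nz Pt.
have cross x y : x != 0 -> x * qeval (QuadZ r0 r1 r2) t = y * qeval (QuadZ p0 p1 p2) t ->
    qeval (QuadZ r0 r1 r2) t = 0.
  by move=> x_nz e; apply/eqP; rewrite -(mulrI_eq0 _ (mulfI x_nz)) e Pt mulr0.
have Zr_nz z : ~~ Z.eqb z Z0 -> Zr z != 0 :> R.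
  by move=> z_nz; apply: contraNneq z_nz => /Zr_eq0 ->.
move: nz; rewrite /qzero /= !negb_and => /or3P[/Zr_nz nz | /Zr_nz nz | /Zr_nz nz];
  [apply: (cross _ (Zr r0) nz) | apply: (cross _ (Zr r1) nz) | apply: (cross _ (Zr r2) nz)];
  apply: qeval_cross => /=;
  first [rewrite e01 | rewrite -e01 | rewrite e02 | rewrite -e02 | rewrite e12 | rewrite -e12 | idtac];
  exact: mulrC.
Qed.

End QuadEval.

Lemma far_roots_no_root {R : numDomainType} {m : quadZ} {t : R} :
  far_roots m -> `|t| <= 2 -> qeval m t != 0.
Proof.
case: m => m0 m1 m2 far t_le2; apply/eqP => e.
have bound : `|Zr m0| <= 2 * `|Zr m1| + 4 * `|Zr m2| :> R.
  have -> : Zr m0 = - (Zr m1 * t + Zr m2 * t ^+ 2) :> R.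
    by apply/eqP; rewrite -addr_eq0 addrA; apply/eqP.
  rewrite normrN (le_trans (ler_normD _ _)) // lerD // !normrM.
    by rewrite mulrC; apply: ler_wpM2r.
  rewrite mulrC (_ : 4 = 2 * 2 :> R); last by rewrite -natrM.
  by apply: ler_wpM2r => //; apply: ler_pM.
suff far_R : 2 * `|Zr m1| + 4 * `|Zr m2| < `|Zr m0| :> R by rewrite (lt_geF far_R) in bound.
rewrite /Zr -!intr_norm -[2 : R]/((2 : int)%:~R) -[4 : R]/((4 : int)%:~R).
by rewrite -!intrM -intrD ltr_int.
Qed.

(** * Row products as quadratics in a + a^* *)

Local Open Scope Z_scope.

(* Codes 0, 1, 2 stand for the entries 1, a, -a^* (see [entry]).  If z is the
   product of entry x and the conjugate of entry y, then at t = a + a^* the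
   quadratic [re_quad x y] takes the value z + conj z and [im_quad x y] the
   value (z - conj z) / (a - conj a). *)
Definition re_quad (x y : nat) : quadZ :=
  match x, y with
  | 0, 0 | 1, 1 | 2, 2 => QuadZ 2 0 0
  | 0, 1 | 1, 0 => QuadZ 0 1 0
  | 0, 2 | 2, 0 => QuadZ 0 (-1) 0
  | 1, 2 | 2, 1 => QuadZ 2 0 (-1)
  | _, _ => QuadZ 0 0 0
  end%nat.

Definition im_quad (x y : nat) : quadZ :=
  match x, y with
  | 0, 1 | 0, 2 => QuadZ (-1) 0 0
  | 1, 0 | 2, 0 => QuadZ 1 0 0
  | 1, 2 => QuadZ 0 (-1) 0
  | 2, 1 => QuadZ 0 1 0
  | _, _ => QuadZ 0 0 0
  end%nat.

Fixpoint pair_quad (f : nat -> nat -> quadZ) (r s : seq nat) : quadZ :=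
  match r, s with
  | x :: r', y :: s' => qadd (f x y) (pair_quad f r' s')
  | _, _ => QuadZ 0 0 0
  end.

Local Close Scope Z_scope.

Definition entry {C : numClosedFieldType} (a : C) (k : nat) : C := nth 0 [:: 1; a; - a^*] k.

Section Entries.
Context {C : numClosedFieldType} {a : C}.
Hypothesis a_unit : a * a^* = 1.

Let t := a + a^*.

Lemma entry_pair_quads x y : (x < 3)%N -> (y < 3)%N ->
  let z := entry a x * (entry a y)^* in
  z + z^* = qeval (re_quad x y) t /\ z - z^* = (a - a^*) * qeval (im_quad x y) t.
Proof.
have a_nz : a != 0 by apply: contra_eq_neq a_unit => ->; rewrite mul0r eq_sym oner_neq0.
have conj_a : a^* = a^-1 by rewrite -[a^*]mul1r -(mulVf a_nz) -mulrA a_unit mulr1.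
case: x => [|[|[|]]] //; case: y => [|[|[|]]] // _ _;
  rewrite /entry /qeval /t /= ?rmorphM ?rmorphN ?rmorph1 /= ?conjCK conj_a /Zr;
  split; field; exact: a_nz.
Qed.

Lemma pair_quad_sum {I : Type} (e : seq I) {f g : I -> nat} :
  (forall k, f k < 3)%N -> (forall k, g k < 3)%N ->
  let z k := entry a (f k) * (entry a (g k))^* in
  qeval (pair_quad re_quad (map f e) (map g e)) t = \sum_(k <- e) (z k + (z k)^*) /\
  (a - a^*) * qeval (pair_quad im_quad (map f e) (map g e)) t = \sum_(k <- e) (z k - (z k)^*).
Proof.
move=> f3 g3 z; elim: e => [|k e [IHre IHim]].
  by rewrite !big_nil /qeval /Zr /= !mul0r !addr0 mulr0.
rewrite /= !big_cons !qevalD mulrDr IHre IHim.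
by have [-> ->] := entry_pair_quads _ _ (f3 k) (g3 k).
Qed.

End Entries.

(** * Compatibility graphs and their cliques *)

Fixpoint words (n : nat) : seq (seq nat) :=
  if n is n'.+1 then flatten [seq [seq x :: w | w <- words n'] | x <- [:: 0; 1; 2]%N]
  else [:: [::]].

Lemma mem_words n w : size w = n -> all (fun x => x < 3)%N w -> w \in words n.
Proof.
elim: n w => [|n IHn] [|x w] //= [size_w] /andP[x_lt3 w_lt3].
have w_in := IHn w size_w w_lt3.
rewrite mem_cat; case: x x_lt3 => [|[|[|]]] // _.
- by rewrite (map_f (cons 0%N) w_in).
- by rewrite mem_cat (map_f (cons 1%N) w_in) orbT.
- by rewrite !mem_cat (map_f (cons 2%N) w_in) !orbT.
Qed.

(* The flag [real] drops the condition on [im_quad], which carries no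
   information when a is real. *)
Definition compatible (m : quadZ) (real : bool) (r s : seq nat) : bool :=
  common_root_test (pair_quad re_quad r s) m &&
  (real || common_root_test (pair_quad im_quad r s) m).

Fixpoint adj_rows {T : Type} (adj : T -> T -> bool) (vs : seq T) : seq (seq bool) :=
  if vs is v :: vs' then map (adj v) vs' :: adj_rows adj vs' else [::].

Fixpoint mask_and (m r : bitseq) : bitseq :=
  match m, r with b :: m', c :: r' => (b && c) :: mask_and m' r' | _, _ => [::] end.

(* [clique_free (adj_rows adj vs) k m] checks that the vertices of [mask m vs]
   contain no k-clique, branching on whether the first candidate is in it. *)
Fixpoint clique_free (rows : seq (seq bool)) (k : nat) (m : bitseq) {struct rows} : bool :=
  if k is k'.+1 then
    match m, rows with
    | b :: m', row :: rows' =>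
      (if b then clique_free rows' k' (mask_and m' row) else true) && clique_free rows' k m'
    | _, _ => true
    end
  else false.

Lemma mem_mask_and (T : eqType) (f : T -> bool) m vs x :
  x \in mask m vs -> f x -> x \in mask (mask_and m (map f vs)) vs.
Proof.
elim: vs m => [|v vs IHvs] [|b m] //=.
case: b => /=; last exact: IHvs.
rewrite inE => /orP[/eqP -> fx | x_in fx]; first by rewrite fx inE eqxx.
by case: (f v); rewrite /= ?inE (IHvs _ x_in fx) ?orbT.
Qed.

Lemma clique_free_clique (T : eqType) (adj : T -> T -> bool) vs k m (S : seq T) :
  uniq S -> {subset S <= mask m vs} ->
  {in S &, forall x y, x != y -> adj x y} ->
  (k <= size S)%N -> clique_free (adj_rows adj vs) k m = false.
Proof.
elim: vs k m S => [|v vs IHvs] [|k] m S uniq_S S_sub S_adj k_le //=.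
  by case: S uniq_S S_sub S_adj k_le => [|x S] // _ /(_ x (mem_head _ _)); case: m.
case: m S_sub => [|b m] S_sub.
  by case: S uniq_S S_sub S_adj k_le => [|x S] // _ /(_ x (mem_head _ _)).
have [/andP[b_true v_in] | v_notin] := boolP (b && (v \in S)).
  rewrite b_true (IHvs k _ (rem v S)) ?rem_uniq //.
  - move=> x; rewrite (mem_rem_uniq _ uniq_S) inE => /andP[x_neq x_in].
    have := S_sub x x_in; rewrite mem_mask_cons (negbTE x_neq) andbF => x_mask.
    by apply: mem_mask_and x_mask _; apply: S_adj; rewrite // eq_sym.
  - by move=> x y; rewrite !(mem_rem_uniq _ uniq_S) !inE => /andP[_ x_in] /andP[_ y_in]; exact: S_adj.
  by rewrite size_rem // -ltnS (leq_trans k_le) // -(ltn_predK k_le).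
rewrite (IHvs k.+1 m S) ?andbF // => x x_in.
have := S_sub x x_in; rewrite mem_mask_cons => /orP[/andP[b_true /eqP x_v] | //].
by rewrite -x_v x_in b_true in v_notin.
Qed.

Definition no_six_compatible (m : quadZ) (real : bool) : bool :=
  all (fun w => ~~ compatible m real w w) (words 6) &&
  clique_free (adj_rows (compatible m real) (words 6)) 6 (nseq (size (words 6)) true).

Lemma no_six_compatibleP {m real} {r : 'I_6 -> seq nat} :
  no_six_compatible m real -> (forall i, r i \in words 6) ->
  ~ (forall i j, i != j -> compatible m real (r i) (r j)).
Proof.
case/andP => irrefl clique_free6 r_words r_compat.
have r_inj : injective r.
  move=> i j r_ij; apply/eqP; apply: contraT => i_neq_j.
  by have := r_compat i j i_neq_j; rewrite r_ij (negbTE (allP irrefl _ (r_words j))).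
move: clique_free6; rewrite (@clique_free_clique _ _ _ _ _ (map r (enum 'I_6))) //.
- by rewrite map_inj_uniq // enum_uniq.
- by move=> _ /mapP[i _ ->]; rewrite mask_true.
- by move=> _ _ /mapP[i _ ->] /mapP[j _ ->] r_neq; apply: r_compat; apply: contra_neq r_neq => ->.
by rewrite size_map size_enum_ord.
Qed.

Local Open Scope Z_scope.

(* The flag is set for t = 2 and t = -2, i.e. a = 1 and a = -1, where only the
   conditions from [re_quad] are available. *)
Definition root_polys : seq (quadZ * bool) :=
  [:: (QuadZ 0 1 0, false); (QuadZ (-1) 1 0, false); (QuadZ 1 1 0, false);
      (QuadZ (-2) 1 0, true); (QuadZ 2 1 0, true);
      (QuadZ (-3) 2 0, false); (QuadZ 3 2 0, false);
      (QuadZ (-2) 0 1, false); (QuadZ (-3) 0 1, false);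
      (QuadZ (-2) 2 1, false); (QuadZ (-2) (-2) 1, false);
      (QuadZ (-4) 1 1, false); (QuadZ (-4) (-1) 1, false);
      (QuadZ (-4) 1 2, false); (QuadZ (-4) (-1) 2, false)].

Definition far_polys : seq quadZ :=
  [:: QuadZ (-3) 1 0; QuadZ 3 1 0; QuadZ (-4) 1 0; QuadZ 4 1 0; QuadZ (-6) 0 1].

Local Close Scope Z_scope.

Definition candidate_polys : seq quadZ := map fst root_polys ++ far_polys.

(* Each branch certifies that a common root t of I and II, unless I = II = 0,
   is a root of a candidate: directly, through a product of two linear
   candidates, or vacuously.  The cascade of [if]s keeps evaluation lazy. *)
Definition root_certificate (I II : quadZ) : bool :=
  if qzero I && qzero II then true else
  if qconst_nz II then true else
  if qconst_nz I then true else
  if ~~ common_root_test I II then true else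
  if ~~ qzero II && has (qprop II) candidate_polys then true else
  if ~~ qzero I && has (qprop I) candidate_polys then true else
  ~~ qzero I && has (fun m => has (fun n => qprop I (qmul_lin m n))
                              (filter qlinear candidate_polys))
                    (filter qlinear candidate_polys).

Lemma root_certificate_sound {R : numDomainType} {I II : quadZ} {t : R} :
  root_certificate I II -> ~~ (qzero I && qzero II) ->
  qeval I t = 0 -> qeval II t = 0 -> exists2 m, m \in candidate_polys & qeval m t = 0.
Proof.
move=> cert nonzero It IIt.
move: cert; rewrite /root_certificate (negbTE nonzero).
rewrite (contraTF qconst_nz_root (introT eqP IIt)) (contraTF qconst_nz_root (introT eqP It)).
rewrite (common_root_test_sound It IIt).
case: ifP => [/andP[II_nz /hasP[m m_in IIm]] _ | _].
  by exists m => //; exact: qprop_root IIm II_nz IIt.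
case: ifP => [/andP[I_nz /hasP[m m_in Im]] _ | _].
  by exists m => //; exact: qprop_root Im I_nz It.
case/andP=> I_nz /hasP[m]; rewrite mem_filter => /andP[m_lin m_in] /hasP[n].
rewrite mem_filter => /andP[n_lin n_in] Imn.
have /eqP := qprop_root Imn I_nz It.
by rewrite qeval_mul_lin // mulf_eq0 => /orP[] /eqP; [exists m | exists n].
Qed.

Lemma row_pairs_certified :
  all (fun r => all (fun s => root_certificate (pair_quad re_quad r s) (pair_quad im_quad r s))
                    (words 6)) (words 6).
Proof. by vm_compute. Qed.

Lemma root_polys_no_six_compatible : all (fun mb => no_six_compatible mb.1 mb.2) root_polys.
Proof. by vm_compute. Qed.

Lemma far_polys_far : all far_roots far_polys.
Proof. by vm_compute. Qed.

(** * Six pairwise orthogonal rows *)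

Lemma complex_hadamard_orthogonal {C : numClosedFieldType} {n} {H : 'M[C]_n} {i j : 'I_n} :
  complex_hadamard H -> i != j -> \sum_k H i k * (H j k)^* = 0.
Proof.
case=> _ H_orth i_neq_j; transitivity ((H *m conj_tr H) i j).
  by rewrite mxE; apply: eq_bigr => k _; rewrite !mxE.
by rewrite H_orth mxE (negbTE i_neq_j) mulr0n.
Qed.

Section SixRows.
Context {C : numClosedFieldType} {a : C} {H : 'M[C]_6}.
Hypotheses (a_norm1 : `|a| = 1) (H_had : complex_hadamard H)
  (H_entries : forall i j, H i j \in [:: 1; a; - a^*]).

Let t := a + a^*.
Let code i j := index (H i j) [:: 1; a; - a^*].

Definition row_word i : seq nat := map (code i) (index_enum 'I_6).

Let code_lt3 i j : (code i j < 3)%N.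
Proof. by rewrite -[3%N]/(size [:: 1; a; - a^*]) index_mem. Qed.

Lemma row_word_in_words i : row_word i \in words 6.
Proof.
apply: mem_words; first by rewrite size_map /index_enum; unlock; rewrite -enumT size_enum_ord.
by apply/allP => _ /mapP[k _ ->].
Qed.

Lemma row_pair_roots {i j} : i != j ->
  qeval (pair_quad re_quad (row_word i) (row_word j)) t = 0 /\
  (a != a^* -> qeval (pair_quad im_quad (row_word i) (row_word j)) t = 0).
Proof.
move=> i_neq_j; have a_unit : a * a^* = 1 by rewrite -normCK a_norm1 expr1n.
have [-> im_sum] := pair_quad_sum a_unit (index_enum 'I_6) (code_lt3 i) (code_lt3 j).
have orth : \sum_(k <- index_enum 'I_6) entry a (code i k) * (entry a (code j k))^* = 0.
  rewrite -[RHS](complex_hadamard_orthogonal H_had i_neq_j); apply: eq_bigr => k _.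
  by rewrite /entry /code !nth_index.
split; first by rewrite big_split /= -rmorph_sum orth rmorph0 addr0.
move=> a_nonreal; apply/eqP; move: im_sum; rewrite sumrB -rmorph_sum orth rmorph0 subr0.
by move/eqP; rewrite mulf_eq0 subr_eq0 (negbTE a_nonreal).
Qed.

Lemma compatible_rows_of_root m real : qeval m t = 0 -> real || (a != a^*) ->
  forall i j, i != j -> compatible m real (row_word i) (row_word j).
Proof.
move=> mt real_or i j i_neq_j; have [re_root im_root] := row_pair_roots i_neq_j.
rewrite /compatible (common_root_test_sound re_root mt) /=.
by case: real real_or => //= /im_root im_root'; rewrite (common_root_test_sound im_root' mt).
Qed.

Lemma real_root_poly : a = a^* -> exists2 m, (m, true) \in root_polys & qeval m t = 0.
Proof.
move=> a_real; have a_sq : (a - 1) * (a + 1) = 0.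
  by rewrite -subr_sqr expr2 {2}a_real -normCK a_norm1 expr1n subrr.
move/eqP: a_sq; rewrite mulf_eq0 => /orP[]; rewrite ?subr_eq0 ?addr_eq0 => /eqP a_val.
  exists (QuadZ (-2) 1 0); rewrite // /qeval /t -a_real a_val /Zr /=.
  by rewrite -[Pos.to_nat 1]/1%N NegzE; ring.
exists (QuadZ 2 1 0); rewrite // /qeval /t -a_real a_val /Zr /=.
by rewrite -[Pos.to_nat 1]/1%N -[Pos.to_nat 2]/2%N; ring.
Qed.

Lemma compatible_root_poly :
  exists2 mb, mb \in root_polys & forall i j, i != j -> compatible mb.1 mb.2 (row_word i) (row_word j).
Proof.
have t_le2 : `|t| <= 2 by rewrite (le_trans (ler_normD _ _)) // norm_conjC a_norm1.
have [a_real | a_nonreal] := eqVneq a a^*.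
  have [m m_in mt] := real_root_poly a_real.
  by exists (m, true) => //; apply: compatible_rows_of_root.
pose I i j := pair_quad re_quad (row_word i) (row_word j).
pose II i j := pair_quad im_quad (row_word i) (row_word j).
have [/existsP[i /existsP[j /andP[i_neq_j nonzero]]] | all_zero] :=
  boolP [exists i, exists j, (i != j) && ~~ (qzero (I i j) && qzero (II i j))].
  have cert : root_certificate (I i j) (II i j).
    by apply: (allP (allP row_pairs_certified _ (row_word_in_words i)) _ (row_word_in_words j)).
  have [re_root im_root] := row_pair_roots i_neq_j.
  have [m] := root_certificate_sound cert nonzero re_root (im_root a_nonreal).
  rewrite mem_cat => /orP[/mapP[[m' real] m_in ->] mt | m_far mt].
    by exists (m', real) => //; apply: compatible_rows_of_root; rewrite ?a_nonreal ?orbT.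
  by have := far_roots_no_root (allP far_polys_far _ m_far) t_le2; rewrite mt eqxx.
exists (QuadZ 0 1 0, false) => // i j i_neq_j.
move: all_zero; rewrite negb_exists => /forallP /(_ i); rewrite negb_exists => /forallP /(_ j).
by rewrite i_neq_j negbK => /andP[Izero IIzero]; rewrite /compatible !qzero_common_root_test.
Qed.

End SixRows.

Theorem mainTheorem10 (C : numClosedFieldType) (a : C) :
  `|a| = 1 ->
  ~ (exists H : 'M[C]_6,
        complex_hadamard H /\ (forall i j, H i j \in [:: 1; a; - a^*])).
Proof.
move=> a_norm1 [H [H_had H_entries]].
have [[m real] m_in compat] := compatible_root_poly a_norm1 H_had H_entries.
exact: no_six_compatibleP (allP root_polys_no_six_compatible _ m_in)
  (row_word_in_words H_entries) compat.
Qed.
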